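(* Let $m\ge2$ be an integer, $U_c=m^{-1/(m-1)}$, $g_c=U_c^m$, and $H_m=\sum_{k=1}^m\frac1k$. For $g>0$ consider the potential $$V(U)=\frac1g\sum_{k=1}^m\frac1k\,U_c^{m-k}\Big[U_c^k-(U_c-U)^k\Big].$$ Then $V(0)=0$, the coefficient of $U$ in $V$ is $1/g$, and $U V'(U)=\frac1g\big[U_c^m-(U_c-U)^m\big]$, so the self-consistency equation $UV'(U)=1$ reads $g=g_c-(U_c-U)^m$. Taking for $0<g<g_c$ the solution $U(g)=U_c-(g_c-g)^{1/m}$ (positive real root), the free energy $f_0(g)=V(U(g))-\ln U(g)$ satisfies, as $g\to g_c^-$, $$f_0(g)=f_0(g_c)+H_m\,\frac{g_c-g}{g_c}-\frac{m}{m+1}\Big(\frac{g_c-g}{g_c}\Big)^{1+\frac1m}+O\big((g_c-g)^{1+\frac2m}\big),$$ where $f_0(g_c)=H_m-\ln U_c$. Hence the entropy exponent (defined by $f_0^{\rm sing}\sim(g_c-g)^{2-\gamma}$) is $\gamma_m=1-\frac1m$.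
   Context: In the tensor model, the leading-order potential is $V(x)=\sum_{n\ge1}t_nx^n$ with $t_n$ the sum of couplings of melonic bubbles with $2n$ vertices, here parametrized as $t_1=1/g$, $t_n=\alpha_n/g$; the leading order two-point function $U$ solves $UV'(U)=1$ and the leading order free energy is $f_0=V(U)-\ln U$. A multicritical point of order $m$ is one where $\partial^j g/\partial U^j=0$ for $1\le j\le m-1$ and $\partial^m g/\partial U^m\neq0$. *)

From Stdlib Require Import Reals.
Open Scope R_scope.

Fixpoint sum1 (f : nat -> R) (n : nat) : R :=
  match n with
  | O => 0
  | S p => sum1 f p + f (S p)
  end.

Definition Uc (m : nat) : R := Rpower (INR m) (- / (INR m - 1)).
Definition gc (m : nat) : R := Uc m ^ m.
Definition Hm (m : nat) : R := sum1 (fun k => / INR k) m.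

Definition V (m : nat) (g U : R) : R :=
  / g * sum1 (fun k => / INR k * Uc m ^ (m - k) * (Uc m ^ k - (Uc m - U) ^ k)) m.

(* nonnegative real m-th root x^{1/m} for x >= 0 (with 0^{1/m} = 0;
   Stdlib's Rpower 0 y is 1, hence the case split) *)
Definition mroot (m : nat) (x : R) : R :=
  if Rle_dec x 0 then 0 else Rpower x (/ INR m).

Definition Ug (m : nat) (g : R) : R := Uc m - mroot m (gc m - g).

Definition f0 (m : nat) (g : R) : R := V m g (Ug m g) - ln (Ug m g).

From Stdlib Require Import Reals Lra Lia.
Open Scope R_scope.

(* Everything follows from the substitution U = U_c (1 - y).  Writing
   L_n(y) = sum_{k=1}^n y^k / k for the partial sums of -ln(1 - y), the
   potential becomes V(U_c (1 - y)) = (g_c / g) (H_m - L_m(y)), and the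
   derivative of each summand telescopes, so U V'(U) = (U_c^m - (U_c-U)^m)/g.
   Below the critical point put t = (g_c - g)/g_c and y = t^{1/m}; then
   g = g_c (1 - t), y^m = t and U(g) = U_c (1 - y).  Expanding
   ln(1 - y) = -L_{m+1}(y) - R_m(y), with the tail bounded by
   |R_m(y)| <= 2 y^{m+2} (mean value theorem), one gets the exact identity
     f_0(g) - [f_0(g_c) + H_m t - m/(m+1) t^{1+1/m}]
       = t (H_m t - (L_m(y) - y) - t y) / (1 - t) + R_m(y),
   whose right-hand side is O(t y^2) = O((g_c - g)^{1+2/m}). *)

Lemma sum1_ext f g n :
  (forall k, (1 <= k <= n)%nat -> f k = g k) -> sum1 f n = sum1 g n.
Proof.
induction n as [|n IH]; intros H; cbn [sum1]; auto.
rewrite IH by (intros; apply H; lia). rewrite H by lia. reflexivity.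
Qed.

Lemma sum1_scal c f n : sum1 (fun k => c * f k) n = c * sum1 f n.
Proof. induction n; cbn [sum1]; [ring | rewrite IHn; ring]. Qed.

Lemma sum1_minus f g n : sum1 (fun k => f k - g k) n = sum1 f n - sum1 g n.
Proof. induction n; cbn [sum1]; [ring | rewrite IHn; ring]. Qed.

Lemma sum1_const c n : sum1 (fun _ => c) n = INR n * c.
Proof. induction n; cbn [sum1]; [simpl; ring | rewrite IHn, S_INR; ring]. Qed.

Lemma sum1_nonneg f n : (forall k, (1 <= k <= n)%nat -> 0 <= f k) -> 0 <= sum1 f n.
Proof.
induction n as [|n IH]; intros H; cbn [sum1]; [lra|].
assert (0 <= sum1 f n) by (apply IH; intros; apply H; lia).
assert (0 <= f (S n)) by (apply H; lia). lra.
Qed.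

Lemma sum1_deriv (F : nat -> R -> R) dF n x :
  (forall k, derivable_pt_lim (F k) x (dF k)) ->
  derivable_pt_lim (fun y => sum1 (fun k => F k y) n) x (sum1 dF n).
Proof.
intros H; induction n; cbn [sum1].
- apply derivable_pt_lim_const.
- apply (derivable_pt_lim_plus (fun y => sum1 (fun k => F k y) n) (F (S n))); auto.
Qed.

Lemma sum1_telescope a b m n : (n <= m)%nat ->
  sum1 (fun k => a ^ (m - k) * b ^ pred k * (a - b)) n = a ^ m - a ^ (m - n) * b ^ n.
Proof.
induction n as [|n IH]; intros Hn; cbn [sum1].
- rewrite Nat.sub_0_r; simpl; ring.
- rewrite IH by lia. replace (m - n)%nat with (S (m - S n)) by lia.
  cbn [pred pow]. ring.
Qed.

Lemma sum1_geometric y n : (1 - y) * sum1 (fun k => y ^ pred k) n = 1 - y ^ n.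
Proof.
induction n; cbn [sum1]; [simpl; ring|].
rewrite Rmult_plus_distr_l, IHn. cbn [pred pow]. ring.
Qed.

Lemma Hm_nonneg m : 0 <= Hm m.
Proof.
apply sum1_nonneg; intros k Hk.
left; apply Rinv_0_lt_compat, lt_0_INR; lia.
Qed.

Lemma INR_gt1 m : (2 <= m)%nat -> 1 < INR m.
Proof. intros; replace 1 with (INR 1) by reflexivity; apply lt_INR; lia. Qed.

Lemma Uc_pos m : 0 < Uc m.
Proof. apply exp_pos. Qed.

Lemma gc_pos m : 0 < gc m.
Proof. apply pow_lt, Uc_pos. Qed.

Lemma Rpower_inv_pow m x : (1 <= m)%nat -> 0 < x -> Rpower x (/ INR m) ^ m = x.
Proof.
intros hm Hx. assert (0 < INR m) by (apply lt_0_INR; lia).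
rewrite <- Rpower_pow by apply exp_pos.
rewrite Rpower_mult, Rinv_l by lra. apply Rpower_1, Hx.
Qed.

Lemma Uc_pow_pred m : (2 <= m)%nat -> Uc m ^ (m - 1) = / INR m.
Proof.
intros hm. pose proof (INR_gt1 m hm).
rewrite <- Rpower_pow by apply Uc_pos. unfold Uc.
rewrite Rpower_mult, minus_INR by lia. simpl INR.
replace (- / (INR m - 1) * (INR m - 1)) with (- (1)) by (field; lra).
rewrite Rpower_Ropp, Rpower_1 by lra. reflexivity.
Qed.

Lemma gc_root m : (2 <= m)%nat -> Rpower (gc m) (/ INR m) = Uc m.
Proof.
intros hm. pose proof (INR_gt1 m hm). unfold gc.
rewrite <- Rpower_pow by apply Uc_pos.
rewrite Rpower_mult, Rinv_r by lra. apply Rpower_1, Uc_pos.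
Qed.

Lemma mroot_gc_scaled m t : (2 <= m)%nat -> 0 < t ->
  mroot m (gc m * t) = Uc m * Rpower t (/ INR m).
Proof.
intros hm Ht. pose proof (gc_pos m). unfold mroot.
destruct (Rle_dec (gc m * t) 0) as [Hle|_]; [nra|].
rewrite <- Rpower_mult_distr, gc_root by auto. reflexivity.
Qed.

Lemma V_zero m g : V m g 0 = 0.
Proof.
unfold V. rewrite (sum1_ext _ (fun _ => 0)), sum1_const; [ring|].
intros k _. rewrite Rminus_0_r. ring.
Qed.

Lemma V_deriv m g U : derivable_pt_lim (V m g) U
  (/ g * sum1 (fun k => Uc m ^ (m - k) * (Uc m - U) ^ pred k) m).
Proof.
assert (Hc : forall c f x l, derivable_pt_lim f x l ->
          derivable_pt_lim (fun y => c - f y) x (- l)).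
{ intros c f x l H. replace (- l) with (0 - l) by ring.
  apply (derivable_pt_lim_minus (fun _ => c)); [apply derivable_pt_lim_const | exact H]. }
replace (sum1 (fun k => Uc m ^ (m - k) * (Uc m - U) ^ pred k) m) with
  (sum1 (fun k => / INR k * Uc m ^ (m - k) *
                  - (INR k * (Uc m - U) ^ pred k * - (1))) m).
2:{ apply sum1_ext; intros k Hk.
    assert (INR k <> 0) by (apply not_0_INR; lia). field. auto. }
apply (derivable_pt_lim_scal _ (/ g)), sum1_deriv; intros k.
apply (derivable_pt_lim_scal _ (/ INR k * Uc m ^ (m - k))), Hc.
apply (derivable_pt_lim_comp (fun y => Uc m - y) (fun y => y ^ k)).
- apply Hc, derivable_pt_lim_id.
- apply derivable_pt_lim_pow.
Qed.

Lemma U_times_V_deriv m g U :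
  U * (/ g * sum1 (fun k => Uc m ^ (m - k) * (Uc m - U) ^ pred k) m)
  = / g * (Uc m ^ m - (Uc m - U) ^ m).
Proof.
replace (Uc m ^ m - (Uc m - U) ^ m)
  with (Uc m ^ m - Uc m ^ (m - m) * (Uc m - U) ^ m) by (rewrite Nat.sub_diag; ring).
rewrite <- sum1_telescope by lia.
rewrite <- !(sum1_scal (/ g)), <- sum1_scal.
apply sum1_ext; intros; ring.
Qed.

(* The slope of V at the origin is 1/g, because U_c^{m-1} = 1/m. *)
Lemma V_deriv_0 m g : (2 <= m)%nat -> 0 < g -> derivable_pt_lim (V m g) 0 (/ g).
Proof.
intros hm Hg. pose proof (INR_gt1 m hm).
replace (/ g) with (/ g * sum1 (fun k => Uc m ^ (m - k) * (Uc m - 0) ^ pred k) m).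
{ apply V_deriv. }
rewrite (sum1_ext _ (fun _ => Uc m ^ (m - 1))).
- rewrite sum1_const, Uc_pow_pred by auto. field. lra.
- intros k Hk. rewrite Rminus_0_r, <- pow_add. f_equal. lia.
Qed.

Lemma self_consistency m g U d : 0 < g -> derivable_pt_lim (V m g) U d ->
  (U * d = 1 <-> g = gc m - (Uc m - U) ^ m).
Proof.
intros Hg Hd. rewrite (uniqueness_limite _ _ _ _ Hd (V_deriv m g U)), U_times_V_deriv.
fold (gc m). split; intros H.
- apply (Rmult_eq_compat_l g) in H.
  rewrite <- Rmult_assoc, Rinv_r, Rmult_1_l, Rmult_1_r in H by lra. lra.
- rewrite H at 1. field. lra.
Qed.

Lemma Ug_solution m g : (2 <= m)%nat -> 0 < g < gc m ->
  g = gc m - (Uc m - Ug m g) ^ m /\ 0 < Ug m g.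
Proof.
intros hm Hg. pose proof (INR_gt1 m hm).
unfold Ug, mroot. destruct (Rle_dec (gc m - g) 0); [lra|].
replace (Uc m - (Uc m - Rpower (gc m - g) (/ INR m)))
  with (Rpower (gc m - g) (/ INR m)) by ring.
rewrite Rpower_inv_pow by (lia || lra). split; [ring|].
rewrite <- (gc_root m hm) at 1.
assert (Rpower (gc m - g) (/ INR m) < Rpower (gc m) (/ INR m)).
{ apply Rlt_Rpower_l; [apply Rinv_0_lt_compat|]; lra. }
lra.
Qed.

Definition log_partial (n : nat) (y : R) : R := sum1 (fun k => y ^ k / INR k) n.

Definition log_tail (m : nat) (y : R) : R := - ln (1 - y) - log_partial (S m) y.

Lemma log_partial_0 n : log_partial n 0 = 0.
Proof.
unfold log_partial. rewrite (sum1_ext _ (fun _ => 0)), sum1_const; [ring|].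
intros [|k] Hk; [lia|]. simpl. unfold Rdiv. ring.
Qed.

Lemma log_tail_0 m : log_tail m 0 = 0.
Proof. unfold log_tail. rewrite log_partial_0, !Rminus_0_r, ln_1. ring. Qed.

(* R_m'(y) = 1/(1 - y) - sum_{k<=m+1} y^{k-1} = y^{m+1} / (1 - y). *)
Lemma log_tail_deriv m c : c < 1 ->
  derivable_pt_lim (log_tail m) c (c ^ S m / (1 - c)).
Proof.
intros Hc. assert (Hnz : 1 - c <> 0) by lra.
replace (c ^ S m / (1 - c)) with
  (- (/ (1 - c) * - (1)) - sum1 (fun k => INR k * c ^ pred k * / INR k + c ^ k * 0) (S m)).
2:{ rewrite (sum1_ext _ (fun k => c ^ pred k)).
    - apply (Rmult_eq_reg_l (1 - c)); [|lra].
      rewrite Rmult_minus_distr_l, sum1_geometric. simpl. field. auto.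
    - intros k Hk. assert (INR k <> 0) by (apply not_0_INR; lia). field. auto. }
apply (derivable_pt_lim_minus (fun y => - ln (1 - y))).
- apply (derivable_pt_lim_opp (fun y => ln (1 - y))).
  apply (derivable_pt_lim_comp (fun y => 1 - y) ln); [|apply derivable_pt_lim_ln; lra].
  replace (- (1)) with (0 - 1) by ring.
  apply (derivable_pt_lim_minus (fun _ => 1));
    [apply derivable_pt_lim_const | apply derivable_pt_lim_id].
- apply sum1_deriv; intros k.
  apply (derivable_pt_lim_mult (fun y => y ^ k) (fun _ => / INR k));
    [apply derivable_pt_lim_pow | apply derivable_pt_lim_const].
Qed.

(* Mean value theorem: |R_m(y)| <= 2 y^{m+2} on [0, 1/2]. *)
Lemma log_tail_bound m y : 0 <= y <= 1/2 -> Rabs (log_tail m y) <= 2 * y ^ S (S m).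
Proof.
intros Hy. destruct (Req_dec y 0) as [->|Hy0].
{ rewrite log_tail_0, Rabs_R0. simpl. lra. }
destruct (MVT_cor2 (log_tail m) (fun c => c ^ S m / (1 - c)) 0 y) as [c [Hmvt Hc]];
  [lra | intros c Hc; apply log_tail_deriv; lra |].
rewrite log_tail_0, !Rminus_0_r in Hmvt. rewrite Hmvt.
assert (0 <= c ^ S m) by (apply pow_le; lra).
assert (c ^ S m <= y ^ S m) by (apply pow_incr; lra).
assert (Hq : 0 <= c ^ S m / (1 - c) <= 2 * y ^ S m).
{ split; [apply Rmult_le_pos; [lra | left; apply Rinv_0_lt_compat; lra]|].
  apply (Rmult_le_reg_r (1 - c)); [lra|].
  unfold Rdiv. rewrite Rmult_assoc, Rinv_l by lra. nra. }
rewrite Rabs_pos_eq by nra. simpl pow in *. nra.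
Qed.

(* L_n(y) - y = O(y^2) on [0, 1]: each term y^k / k with k >= 2 is at most y^2. *)
Lemma log_partial_quadratic y n : (1 <= n)%nat -> 0 <= y <= 1 ->
  0 <= log_partial n y - y <= INR n * y ^ 2.
Proof.
intros Hn Hy. unfold log_partial. induction n as [|n IH]; [lia|].
destruct n as [|n]; [cbn [sum1]; simpl; split; nra|].
specialize (IH ltac:(lia)). cbn [sum1] in *.
assert (Hk : 1 <= INR (S (S n)))
  by (replace 1 with (INR 1) by reflexivity; apply le_INR; lia).
assert (Hp : 0 <= y ^ S (S n) <= y ^ 2).
{ replace (S (S n)) with (2 + n)%nat by lia. rewrite pow_add.
  assert (0 <= y ^ n <= 1) by (split; [apply pow_le; lra | rewrite <- (pow1 n); apply pow_incr; lra]).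
  assert (0 <= y ^ 2) by (apply pow_le; lra). split; nra. }
assert (0 <= y ^ S (S n) / INR (S (S n)) <= y ^ 2).
{ split; [apply Rmult_le_pos; [lra | left; apply Rinv_0_lt_compat; lra]|].
  apply (Rmult_le_reg_r (INR (S (S n)))); [lra|].
  unfold Rdiv. rewrite Rmult_assoc, Rinv_l by lra. nra. }
assert (INR (S (S n)) * y ^ 2 = INR (S n) * y ^ 2 + y ^ 2) by (rewrite (S_INR (S n)); ring).
lra.
Qed.

Lemma V_scaled m g y : (2 <= m)%nat ->
  V m g (Uc m * (1 - y)) = / g * gc m * (Hm m - log_partial m y).
Proof.
intros hm. unfold V, Hm, gc, log_partial.
rewrite (sum1_ext _ (fun k => Uc m ^ m * (/ INR k - y ^ k / INR k))).
- rewrite sum1_scal, sum1_minus. ring.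
- intros k Hk. replace (Uc m - Uc m * (1 - y)) with (Uc m * y) by ring.
  rewrite Rpow_mult_distr.
  assert (Hsplit : Uc m ^ m = Uc m ^ (m - k) * Uc m ^ k)
    by (rewrite <- pow_add; f_equal; lia).
  rewrite Hsplit. unfold Rdiv. ring.
Qed.

Lemma Ug_gc m : Ug m (gc m) = Uc m.
Proof. unfold Ug, mroot. rewrite Rminus_diag. destruct (Rle_dec 0 0); [ring | lra]. Qed.

Lemma f0_gc m : (2 <= m)%nat -> f0 m (gc m) = Hm m - ln (Uc m).
Proof.
intros hm. pose proof (gc_pos m). unfold f0. rewrite Ug_gc.
replace (Uc m) with (Uc m * (1 - 0)) at 1 by ring.
rewrite V_scaled, log_partial_0 by auto. field. lra.
Qed.

Lemma f0_deviation m g y t : (2 <= m)%nat -> 0 < g -> 0 < y < 1 ->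
  y ^ m = t -> g = gc m * (1 - t) ->
  V m g (Uc m * (1 - y)) - ln (Uc m * (1 - y))
    - (Hm m - ln (Uc m) + Hm m * t - INR m / (INR m + 1) * (t * y))
  = t * (Hm m * t - (log_partial m y - y) - t * y) / (1 - t) + log_tail m y.
Proof.
intros hm Hg Hy Hyt Hgt. pose proof (gc_pos m). pose proof (Uc_pos m).
assert (Ht1 : 1 - t <> 0) by (intro; nra).
assert (Hln : ln (1 - y) = - log_tail m y - log_partial m y - t * y / (INR m + 1)).
{ unfold log_tail, log_partial. cbn [sum1]. rewrite S_INR, <- tech_pow_Rmult, Hyt.
  fold (log_partial m y). field. pose proof (pos_INR m). lra. }
rewrite V_scaled, ln_mult, Hln by (auto; lra). subst g.
field. pose proof (pos_INR m). repeat split; lra.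
Qed.

Lemma deviation_bound t y H D P M : 0 < t <= y ^ 2 -> 0 < y <= 1/2 -> t <= 1/2 ->
  0 <= H -> 0 <= D <= M * y ^ 2 -> Rabs P <= 2 * t * y ^ 2 ->
  Rabs (t * (H * t - D - t * y) / (1 - t) + P) <= (2 * H + 2 * M + 4) * t * y ^ 2.
Proof.
intros Ht Hy Ht2 HH HD HP.
set (Q := H * t - D - t * y).
assert (HQ : Rabs Q <= H * y ^ 2 + M * y ^ 2 + y ^ 2) by (apply Rabs_le; unfold Q; split; nra).
assert (Hr : 0 < t / (1 - t) <= 2 * t).
{ split; [apply Rdiv_lt_0_compat; lra|].
  apply (Rmult_le_reg_r (1 - t)); [lra|].
  unfold Rdiv. rewrite Rmult_assoc, Rinv_l by lra. nra. }
replace (t * Q / (1 - t)) with (t / (1 - t) * Q) by (field; lra).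
eapply Rle_trans; [apply Rabs_triang|].
rewrite Rabs_mult, (Rabs_pos_eq (t / (1 - t))) by lra.
pose proof (Rabs_pos Q).
assert (t / (1 - t) * Rabs Q <= 2 * t * (H * y ^ 2 + M * y ^ 2 + y ^ 2))
  by (apply Rmult_le_compat; lra).
nra.
Qed.

Lemma small_root m y : (2 <= m)%nat -> 0 < y -> y ^ m < (/ 2) ^ m ->
  y < 1/2 /\ y ^ m <= y ^ 2.
Proof.
intros hm Hy Hlt.
assert (Hy2 : y < 1/2).
{ destruct (Rlt_le_dec y (1/2)) as [|Hge]; auto.
  assert ((/ 2) ^ m <= y ^ m) by (apply pow_incr; lra). lra. }
split; auto.
replace m with (2 + (m - 2))%nat by lia. rewrite pow_add.
assert (y ^ (m - 2) <= 1) by (rewrite <- (pow1 (m - 2)); apply pow_incr; lra).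
assert (0 < y ^ 2) by (apply pow_lt; lra).
assert (0 <= y ^ (m - 2)) by (apply pow_le; lra). nra.
Qed.

Lemma Rpower_gc_scaled m t : (2 <= m)%nat -> 0 < t ->
  Rpower (gc m * t) (1 + 2 / INR m) = gc m * t * (Uc m * Rpower t (/ INR m)) ^ 2.
Proof.
intros hm Ht. pose proof (INR_gt1 m hm). pose proof (gc_pos m).
rewrite Rpower_plus, Rpower_1 by nra.
replace (2 / INR m) with (/ INR m * INR 2) by (simpl; field; lra).
rewrite <- Rpower_mult, Rpower_pow, <- Rpower_mult_distr, gc_root by (auto || apply exp_pos).
reflexivity.
Qed.

Lemma f0_expansion m : (2 <= m)%nat ->
  exists C delta : R, 0 < delta /\
    forall g : R, 0 < g -> gc m - delta < g < gc m ->
      Rabs (f0 m g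
            - (f0 m (gc m) + Hm m * ((gc m - g) / gc m)
               - INR m / (INR m + 1) * Rpower ((gc m - g) / gc m) (1 + / INR m)))
      <= C * Rpower (gc m - g) (1 + 2 / INR m).
Proof.
intros hm. pose proof (INR_gt1 m hm). pose proof (Uc_pos m). pose proof (gc_pos m).
assert (Hhalf : 0 < (/ 2) ^ m) by (apply pow_lt; lra).
exists ((2 * Hm m + 2 * INR m + 4) / (gc m * Uc m ^ 2)), (gc m * (/ 2) ^ m).
split; [nra|]. intros g Hg Hgd.
set (t := (gc m - g) / gc m). set (y := Rpower t (/ INR m)).
assert (Ht : 0 < t) by (apply Rdiv_lt_0_compat; lra).
assert (Hs : gc m - g = gc m * t) by (unfold t; field; lra).
assert (Hy : 0 < y) by apply exp_pos.
assert (Hyt : y ^ m = t) by (apply Rpower_inv_pow; lia || lra).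
assert (Hsmall : y ^ m < (/ 2) ^ m).
{ rewrite Hyt. apply (Rmult_lt_reg_l (gc m)); lra. }
destruct (small_root m y hm Hy Hsmall) as [Hy2 Hty]. rewrite Hyt in Hty.
assert (Ht2 : t <= 1/2) by (assert (y ^ 2 <= 1/4) by (simpl; nra); lra).
assert (HUg : Ug m g = Uc m * (1 - y))
  by (unfold Ug; rewrite Hs, mroot_gc_scaled by auto; fold y; ring).
assert (Hp1 : Rpower t (1 + / INR m) = t * y) by (rewrite Rpower_plus, Rpower_1; auto).
fold t. rewrite Hp1, Hs, Rpower_gc_scaled, f0_gc by auto. fold y. unfold f0. rewrite HUg.
rewrite (f0_deviation m g y t) by (auto; lra || (unfold t; field; lra)).
replace ((2 * Hm m + 2 * INR m + 4) / (gc m * Uc m ^ 2) * (gc m * t * (Uc m * y) ^ 2))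
  with ((2 * Hm m + 2 * INR m + 4) * t * y ^ 2) by (field; nra).
apply deviation_bound; try lra.
- apply Hm_nonneg.
- apply log_partial_quadratic; lia || lra.
- eapply Rle_trans; [apply log_tail_bound; lra|].
  replace (y ^ S (S m)) with (y ^ m * y ^ 2) by (rewrite <- pow_add; f_equal; lia).
  rewrite Hyt. lra.
Qed.

Theorem mainTheorem7 (m : nat) (hm : (2 <= m)%nat) :
  (* V(0) = 0 and the coefficient of U in V (= V'(0)) is 1/g *)
  (forall g : R, 0 < g -> V m g 0 = 0 /\ derivable_pt_lim (V m g) 0 (/ g)) /\
  (* U V'(U) = (1/g)[U_c^m - (U_c - U)^m] *)
  (forall g U : R, 0 < g -> exists d : R,
      derivable_pt_lim (V m g) U d /\
      U * d = / g * (Uc m ^ m - (Uc m - U) ^ m)) /\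
  (* the self-consistency equation U V'(U) = 1 reads g = g_c - (U_c - U)^m *)
  (forall g U d : R, 0 < g -> derivable_pt_lim (V m g) U d ->
      (U * d = 1 <-> g = gc m - (Uc m - U) ^ m)) /\
  (* U(g) solves it for 0 < g < g_c, and is positive *)
  (forall g : R, 0 < g < gc m ->
      g = gc m - (Uc m - Ug m g) ^ m /\ 0 < Ug m g) /\
  (* value at the critical point *)
  f0 m (gc m) = Hm m - ln (Uc m) /\
  (* asymptotic expansion as g -> g_c^- *)
  (exists C delta : R, 0 < delta /\
     forall g : R, 0 < g -> gc m - delta < g < gc m ->
       Rabs (f0 m g
             - (f0 m (gc m) + Hm m * ((gc m - g) / gc m)
                - INR m / (INR m + 1) * Rpower ((gc m - g) / gc m) (1 + / INR m)))
       <= C * Rpower (gc m - g) (1 + 2 / INR m)).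
Proof.
split; [|split; [|split; [|split; [|split]]]].
- intros g Hg. split; [apply V_zero | apply V_deriv_0; auto].
- intros g U _. eexists. split; [apply V_deriv | apply U_times_V_deriv].
- apply self_consistency.
- intros g Hg. apply Ug_solution; auto.
- apply f0_gc, hm.
- apply f0_expansion, hm.
Qed.
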